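(* Let $d\ge1$, $\alpha>1$ and $p\in(0,1]$. For every $\zeta>0$ there exist $\theta\in(0,\zeta)$ and $N=N(\theta)\in\mathbb{N}$ such that for every $n>N$, every realization of $\omega_p$, every minimizing path $\pi_n$ for $T_n(\bar\omega_p)$ (with $\bar\omega_p$ built using this $\theta$ and $n$), and every $1\le i\le n$, \[\Delta\pi_n(i)\le n^{\zeta}.\]
   Context: Let $\{\eta(j,x)\}_{(j,x)\in\mathbb{N}\times\mathbb{Z}^d}$ be i.i.d. Bernoulli under $Q$ with $Q(\eta(0,0)=1)=p$. For $p\in(0,1)$ set $s_p=(\log\frac1p)^{1/d}$ and $\omega_p=\sum_{(k,x)\in\mathbb{N}\times\mathbb{Z}^d}(1-\eta(k,x))\delta_{(k,s_px)}$; $\omega_1$ is a Poisson point process on $\mathbb{N}\times\mathbb{R}^d$ with intensity counting measure $\times$ Lebesgue measure. Point measures are identified with their supports. Given $\theta>0$ and $n$, define \[\bar\omega_p=\omega_p+\sum_{(k,x)\in\mathbb{N}\times n^\theta\mathbb{Z}^d}1_{\{\omega_p(\{k\}\times(x+[0,n^\theta)^d))=0\}}\delta_{(k,x)}.\] For a configuration $\omega$, with $|x|_1=\sum_i|x_i|$, $T_n(\omega)=\min\{\sum_{k=1}^n|x_{k-1}-x_k|_1^\alpha:\ x_0=0,\ \{(k,x_k)\}_{k=1}^n\subset\omega\}$, and a minimizing path is a sequence $\pi_n=(\pi_n(1),\dots,\pi_n(n))$ attaining this minimum. With $\pi_n(0)=0$, $\Delta\pi_n(i)=|\pi_n(i)-\pi_n(i-1)|_1$.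 *)

From HB Require Import structures.
From mathcomp Require Import all_boot all_order all_algebra.
From mathcomp Require Import all_classical all_reals all_analysis.
Set Implicit Arguments. Unset Strict Implicit. Unset Printing Implicit Defensive.
Import Order.TTheory GRing.Theory Num.Theory.
Local Open Scope ring_scope.
Local Open Scope classical_set_scope.

Section Defs.
Variables (R : realType) (d : nat).

Definition pt := 'I_d -> R.
Definition pt0 : pt := fun _ => 0.
Definition l1 (x : pt) : R := \sum_(i < d) `|x i|.
(* configurations = supports of point measures on N x R^d *)
Definition config := set (nat * pt).

Definition s_p (p : R) : R := (ln p^-1) `^ (d%:R)^-1.

(* omega_p for a realization eta of the Bernoulli field (p < 1):
   points (k, s_p x) with eta(k,x) = 0 *)
Definition omega_of_eta (p : R) (eta : nat -> ('I_d -> int) -> bool) : config :=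
  [set kx | exists z : 'I_d -> int,
      eta kx.1 z = false /\ kx.2 = (fun i => s_p p * (z i)%:~R)].

(* realizations of a Poisson process on N x R^d (as supports): locally finite sets *)
Definition locally_finite (w : config) : Prop :=
  forall (k : nat) (r : R), finite_set [set y | w (k, y) /\ l1 y <= r].

Definition realization (p : R) (w : config) : Prop :=
  if p < 1 then exists eta, w = omega_of_eta p eta else locally_finite w.

Definition corner (L : R) (z : 'I_d -> int) : pt := fun i => L * (z i)%:~R.
Definition in_box (L : R) (z : 'I_d -> int) (y : pt) : Prop :=
  forall i, L * (z i)%:~R <= y i < L * (z i)%:~R + L.

Definition augment (L : R) (w : config) : config :=
  w `|` [set kx | exists z : 'I_d -> int, kx.2 = corner L z /\
                   ~ (exists y, w (kx.1, y) /\ in_box L z y)].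

Definition admissible (w : config) (n : nat) (x : nat -> pt) : Prop :=
  x 0%N = pt0 /\ forall k, (1 <= k <= n)%N -> w (k, x k).

Definition step (x : nat -> pt) (k : nat) : R := l1 (fun j => x k.-1 j - x k j).

Definition cost (alpha : R) (n : nat) (x : nat -> pt) : R :=
  \sum_(1 <= k < n.+1) (step x k) `^ alpha.

Definition minimizing (w : config) (n : nat) (alpha : R) (x : nat -> pt) : Prop :=
  admissible w n x /\
  forall y, admissible w n y -> cost alpha n x <= cost alpha n y.

End Defs.

From HB Require Import structures.
From mathcomp Require Import all_boot all_order all_algebra.
From mathcomp Require Import all_classical all_reals all_analysis.
From mathcomp Require Import ring lra zify.
Import Order.TTheory GRing.Theory Num.Theory.
Set Implicit Arguments. Unset Strict Implicit.
Local Open Scope ring_scope.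
Local Open Scope classical_set_scope.

(* Every point of N x R^d lies within sup-distance L = n^theta of a point of
   the augmented configuration, so a minimizing path can be rerouted along any
   target path at an extra cost of at most c = 2dL per step. Rerouting a block of m steps along the
   straight segment between its endpoints shows that the alpha-th powers of its
   steps sum to at most m (A + c)^alpha, A being the mean step, and standing
   still for the rest of the time bounds the mean of the tail by c. By strict
   convexity of x^alpha, a block whose mean drops by the factor rho when it is
   prolonged is short: its total length is O(c) times the prolonged length.
   Following the blocks starting at step i through K scales of ratio
   F = n^(1/K) gives Delta pi(i) <= C c F rho^K, which is at most n^zeta for
   theta = zeta/3, K > 3/zeta and n large. *)

Section power_convexity.
Variable R : realType.
Implicit Types a r u v x y : R.

Lemma ler_powR2r r x y : 0 <= r -> 0 <= x -> x <= y -> x `^ r <= y `^ r.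
Proof. by move=> r0 x0 xy; apply: ge0_ler_powR; rewrite ?nnegrE // (le_trans x0). Qed.

Lemma powR_MVT a u v : 0 < v -> v < u ->
  exists2 c, v < c < u & u `^ a - v `^ a = a * c `^ (a - 1) * (u - v).
Proof.
move=> v0 vu.
have [] := @MVT R (fun x => x `^ a) (fun x => a * x `^ (a - 1)) v u vu.
- move=> x; rewrite in_itv /= => /andP[vx _].
  by apply: is_derive1_powR; exact: lt_trans vx.
- apply: derivable_within_continuous => x; rewrite in_itv /= => /andP[vx _].
  by apply: derivable_powR; rewrite in_itv /= andbT (lt_le_trans v0).
- by move=> c; rewrite in_itv /= => cI ->; exists c.
Qed.

Lemma powR_tangent a u v : 1 < a -> 0 <= u -> 0 <= v ->
  v `^ a + a * v `^ (a - 1) * (u - v) <= u `^ a.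
Proof.
move=> a1 u0 v0; have a0 : 0 < a by exact: lt_trans a1.
have a10 : 0 <= a - 1 by rewrite subr_ge0 ltW.
have [->|vn0] := eqVneq v 0.
  by rewrite !powR0 ?gt_eqF ?subr_gt0 // mulr0 mul0r addr0 powR_ge0.
have vp : 0 < v by rewrite lt_def vn0.
have [->|un0] := eqVneq u 0.
  rewrite powR0 ?gt_eqF // sub0r mulrN -mulrA (mulrC _ v) mulr_powRB1 //.
  by have := powR_ge0 v a; nra.
have up : 0 < u by rewrite lt_def un0.
have [uv|vu|->] := ltgtP u v; last by rewrite subrr mulr0 addr0.
- have [c /andP[uc cv] E] := @powR_MVT a v u up uv.
  suff : a * c `^ (a - 1) * (v - u) <= a * v `^ (a - 1) * (v - u) by nra.
  apply: ler_wpM2r; first by rewrite subr_ge0 ltW.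
  by apply: ler_wpM2l; [exact: ltW | apply: ler_powR2r => //; rewrite ltW // (lt_trans up uc)].
- have [c /andP[vc cu] E] := @powR_MVT a u v vp vu.
  suff : a * v `^ (a - 1) * (u - v) <= a * c `^ (a - 1) * (u - v) by lra.
  apply: ler_wpM2r; first by rewrite subr_ge0 ltW.
  by apply: ler_wpM2l; [exact: ltW | apply: ler_powR2r => //; exact: ltW].
Qed.

Lemma sum_powR_le_const a v lo hi (f : nat -> R) : 0 <= a ->
  (forall k, (lo <= k < hi)%N -> 0 <= f k <= v) ->
  \sum_(lo <= k < hi) f k `^ a <= (hi - lo)%:R * v `^ a.
Proof.
move=> a0 fv; rewrite mulr_natl -sumr_const_nat big_nat_cond [leRHS]big_nat_cond.
apply: ler_sum => k /andP[/fv/andP[f0 fkv] _]; exact: ler_powR2r.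
Qed.

End power_convexity.

Section blocks.
Variables (R : realType) (al c : R) (s : nat -> R) (i : nat).
Hypotheses (al1 : 1 < al) (c0 : 0 < c) (s_ge0 : forall k, 0 <= s k).

Definition block_sum m := \sum_(i <= k < i + m) s k.
Definition block_powsum m := \sum_(i <= k < i + m) s k `^ al.
Definition block_mean m := block_sum m / m%:R.
Definition block_almost_flat m := block_powsum m <= m%:R * (block_mean m + c) `^ al.

Definition rho := (2 * al) `^ (al - 1)^-1.
Definition beta := 2 * al * 2 `^ (al - 1).

Let al_gt0 : 0 < al. Proof. exact: lt_trans al1. Qed.
Let al1_ge0 : 0 <= al - 1. Proof. by rewrite subr_ge0 ltW. Qed.

Lemma rho_powR : rho `^ (al - 1) = 2 * al.
Proof.
rewrite /rho -powRrM mulVf ?powRr1 ?subr_eq0 ?gt_eqF //.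
by rewrite mulr_ge0 // ltW.
Qed.

Lemma rho_ge1 : 1 <= rho.
Proof.
rewrite /rho -[leLHS](powRr0 (2 * al)); apply: ler_powR; rewrite ?invr_ge0 //.
by have := al1; lra.
Qed.

Lemma beta_ge1 : 1 <= beta.
Proof.
have : 1 <= 2 `^ (al - 1) by rewrite -[leLHS](powRr0 2); apply: ler_powR; rewrite ?ler1n.
by rewrite /beta; have := al1; nra.
Qed.

Lemma sum_powR_ge_tangent lo hi v : (lo <= hi)%N -> 0 <= v ->
  (hi - lo)%:R * v `^ al + al * v `^ (al - 1) *
     (\sum_(lo <= k < hi) s k - (hi - lo)%:R * v)
  <= \sum_(lo <= k < hi) s k `^ al.
Proof.
move=> lohi v0.
apply: le_trans (_ : \sum_(lo <= k < hi) (v `^ al + al * v `^ (al - 1) * (s k - v)) <= _).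
  rewrite big_split /= sumr_const_nat -mulr_sumr sumrB sumr_const_nat.
  by rewrite !mulr_natl.
by apply: ler_sum => k _; apply: powR_tangent.
Qed.

Lemma block_mean_ge0 m : 0 <= block_mean m.
Proof. by rewrite divr_ge0 ?sumr_ge0. Qed.

Lemma block_sumE m : (0 < m)%N -> block_sum m = m%:R * block_mean m.
Proof. by move=> m0; rewrite /block_mean mulrC divfK // pnatr_eq0 -lt0n. Qed.

Lemma block_mean1 : block_mean 1 = s i.
Proof. by rewrite /block_mean /block_sum divr1 addn1 big_nat1. Qed.

Lemma block_powsum_ge_mean m : (0 < m)%N ->
  m%:R * block_mean m `^ al <= block_powsum m.
Proof.
move=> m0; have := sum_powR_ge_tangent (leq_addr m i) (block_mean_ge0 m).
by rewrite addKn -/(block_sum m) -block_sumE // subrr mulr0 addr0.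
Qed.

Lemma block_powsum_prolong m m' : (0 < m)%N -> (m <= m')%N ->
  m%:R * block_mean m `^ al + (m' - m)%:R * block_mean m' `^ al
  + al * block_mean m' `^ (al - 1) * (m%:R * (block_mean m' - block_mean m))
  <= block_powsum m'.
Proof.
move=> m0 mm'; have m'0 : (0 < m')%N := leq_trans m0 mm'.
have imm' : (i + m <= i + m')%N by rewrite leq_add2l.
have split_at (f : nat -> R) :
    \sum_(i <= k < i + m') f k = \sum_(i <= k < i + m) f k + \sum_(i + m <= k < i + m') f k.
  by rewrite -big_cat_nat ?leq_addr.
have tail_sum : \sum_(i + m <= k < i + m') s k = m'%:R * block_mean m' - m%:R * block_mean m.
  by rewrite -!block_sumE // /block_sum (split_at s) addrAC subrr add0r.
have := sum_powR_ge_tangent imm' (block_mean_ge0 m').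
rewrite subnDl tail_sum /block_powsum split_at natrB //.
have := block_powsum_ge_mean m0; rewrite /block_powsum; lra.
Qed.

Lemma block_mean_drop m m' : (0 < m)%N -> (m < m')%N -> block_almost_flat m' ->
  c <= block_mean m -> rho * block_mean m' <= block_mean m ->
  m%:R * block_mean m <= beta * c * m'%:R.
Proof.
rewrite /block_almost_flat => m0 mm' W cA1 rA.
set A1 := block_mean m in cA1 rA *; set A := block_mean m' in rA W *.
have A0 : 0 <= A := block_mean_ge0 m'.
have A1_gt0 : 0 < A1 := lt_le_trans c0 cA1.
have AA1 : A <= A1.
  by apply: le_trans rA; rewrite ler_peMl //; exact: rho_ge1.
have P := block_powsum_prolong m0 (ltnW mm').
rewrite -/A -/A1 natrB ?(ltnW mm') // in P.
have rho_ge0 : 0 <= rho by rewrite (le_trans ler01 rho_ge1).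
have ZU : 2 * al * A `^ (al - 1) <= A1 `^ (al - 1).
  by rewrite -rho_powR -powRM //; exact: (ler_powR2r al1_ge0 (mulr_ge0 rho_ge0 A0)).
have VU : (A + c) `^ (al - 1) <= 2 `^ (al - 1) * A1 `^ (al - 1).
  rewrite -powRM ?ler0n ?(ltW A1_gt0) //.
  by apply: (ler_powR2r al1_ge0 (addr_ge0 A0 (ltW c0))); lra.
set Z := A `^ (al - 1) in P ZU *; set U := A1 `^ (al - 1) in ZU VU *.
set V := (A + c) `^ (al - 1) in VU *.
have U_gt0 : 0 < U by rewrite powR_gt0.
have AZ : A `^ al = A * Z by rewrite mulr_powRB1.
have A1U : A1 `^ al = A1 * U by rewrite mulr_powRB1 // ltW.
have AcV : (A + c) `^ al <= A * Z + al * c * V.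
  have := powR_tangent al1 A0 (addr_ge0 A0 (ltW c0)); rewrite AZ -/V; lra.
(* [P], [W] and [AcV] give m A1 U - al m A1 Z <= al c m' V, up to the
   nonnegative term (al - 1) m A Z; by [ZU] the left side is at least
   m A1 U / 2 and by [VU] the right side is at most al c m' 2^(al-1) U. *)
set mm := m%:R in P *; set nn := m'%:R in P W *.
have mm0 : 0 <= mm by [].
have nn0 : 0 <= nn by [].
have f1 : al * (mm * A1 * Z) <= mm * A1 * U / 2.
  by have := ler_wpM2r (mulr_ge0 mm0 (ltW A1_gt0)) ZU; lra.
have f2 : 0 <= (al - 1) * (mm * A * Z).
  exact: mulr_ge0 al1_ge0 (mulr_ge0 (mulr_ge0 mm0 A0) (powR_ge0 _ _)).
have f3 : al * (nn * c * V) <= al * (nn * c * (2 `^ (al - 1) * U)).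
  exact/(ler_wpM2l (ltW al_gt0))/(ler_wpM2l (mulr_ge0 nn0 (ltW c0))).
have f4 : nn * (A + c) `^ al <= nn * (A * Z + al * c * V) by exact: ler_wpM2l.
rewrite AZ A1U in P.
rewrite -(ler_pM2r U_gt0) /beta; lra.
Qed.

Lemma le_scale_threshold r F : 0 <= r -> 1 <= F -> c * r <= 2 * beta * c * F * r.
Proof.
move=> r0 F1; have : 1 <= 2 * beta * F by have := beta_ge1; nra.
by move/(ler_wpM2r (mulr_ge0 (ltW c0) r0)); rewrite mul1r; lra.
Qed.

Lemma block_mean_scale_step D r F m m' : 0 < r -> 1 <= F ->
  (0 < m)%N -> (m < m')%N -> m'%:R <= 2 * F * m%:R -> block_almost_flat m' ->
  2 * beta * c * F * r < D -> D <= r * block_mean m ->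
  D <= rho * r * block_mean m'.
Proof.
move=> r_gt0 F1 m0 mm' m'F Wm' Dbig Dm.
rewrite leNgt; apply/negP => Dm'.
have cr_le := le_scale_threshold (ltW r_gt0) F1.
have cA : c <= block_mean m.
  by rewrite -(ler_pM2r r_gt0) mulrC; lra.
have rA : rho * block_mean m' <= block_mean m.
  by rewrite -(ler_pM2l r_gt0) mulrA (mulrC r); lra.
have c_beta : 0 <= beta * c := mulr_ge0 (le_trans ler01 beta_ge1) (ltW c0).
have drop := le_trans (block_mean_drop m0 mm' Wm' cA rA) (ler_wpM2l c_beta m'F).
have mean_le : block_mean m <= 2 * beta * c * F.
  by rewrite -(@ler_pM2l _ m%:R) ?ltr0n //; apply: le_trans drop _; lra.
by have := ler_wpM2l (ltW r_gt0) mean_le; lra.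
Qed.

Lemma block_mean_scales M F K :
  (forall m, (0 < m)%N -> (m <= M)%N -> block_almost_flat m) ->
  1 <= F -> 2 * beta * c * F * rho ^+ K < s i ->
  forall k, (k <= K)%N -> forall m, (0 < m)%N -> (m <= M)%N -> m%:R <= F ^+ k ->
  s i <= rho ^+ k * block_mean m.
Proof.
move=> W F1 big; have rho1 := rho_ge1; have rho_gt0 := lt_le_trans ltr01 rho1.
elim=> [|k IH] kK m m0 mM mF.
  suff -> : m = 1%N by rewrite expr0 mul1r block_mean1.
  by apply/eqP; rewrite eqn_leq m0 andbT -(ler_nat R).
have Fk1 : 1 <= F ^+ k by exact: exprn_ege1.
have [mFk|Fkm] := leP (m%:R) (F ^+ k).
  apply: le_trans (IH (ltnW kK) m m0 mM mFk) _.
  by rewrite exprS ler_wpM2r ?block_mean_ge0 // ler_peMl // exprn_ge0 // ltW.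
pose m1 := Num.truncn (F ^+ k).
have m1_gt0 : (0 < m1)%N by rewrite truncn_gt0.
have m1F : m1%:R <= F ^+ k by rewrite truncn_le (le_trans ler01 Fk1).
have Fm1 : F ^+ k < m1.+1%:R by exact: truncnS_gt.
have m1m : (m1 < m)%N by rewrite -(ltr_nat R) (le_lt_trans m1F).
rewrite exprSr (mulrC _ rho); apply: (block_mean_scale_step (F := F) (m := m1)) => //.
- exact: exprn_gt0.
- have : (1 <= m1)%N by [].
  rewrite -(ler_nat R) => m1_ge1; rewrite -natr1 in Fm1.
  by apply: le_trans mF _; rewrite exprS; nra.
- exact: W.
- apply: le_lt_trans big; apply: ler_wpM2l; last exact: ler_weXn2l (ltnW kK).
  rewrite mulr_ge0 ?(le_trans ler01 F1) // mulr_ge0 ?(ltW c0) //.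
  by rewrite mulr_ge0 // (le_trans ler01 beta_ge1).
- by apply: IH; rewrite ?(ltnW kK) // (leq_trans (ltnW m1m)).
Qed.

Lemma block_head_le M F K : (0 < M)%N ->
  (forall m, (0 < m)%N -> (m <= M)%N -> block_almost_flat m) ->
  block_powsum M <= M%:R * c `^ al -> 1 <= F -> M%:R <= F ^+ K ->
  s i <= 2 * beta * c * F * rho ^+ K.
Proof.
move=> M0 W tail F1 MF; rewrite leNgt; apply/negP => big.
have := block_mean_scales W F1 big (leqnn K) M0 (leqnn M) MF.
have mean_le : block_mean M <= c.
  rewrite leNgt; apply/negP => c_lt.
  have : c `^ al < block_mean M `^ al.
    by apply: gt0_ltr_powR; rewrite ?nnegrE ?block_mean_ge0 ?ltW.
  have := block_powsum_ge_mean M0; rewrite -(ltr_pM2l (ltr0Sn R M.-1)) prednK //.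
  lra.
have rK := exprn_ge0 K (le_trans ler01 rho_ge1).
have := ler_wpM2l rK mean_le; have := le_scale_threshold rK F1; lra.
Qed.

End blocks.

Section rerouting.
Variables (R : realType) (d : nat) (L : R) (w : config R d).
Hypothesis L_gt0 : 0 < L.

Definition nearby (y t : pt R d) := forall j, `|y j - t j| <= L.

Lemma nearby_refl t : nearby t t.
Proof. by move=> j; rewrite subrr normr0 ltW. Qed.

Lemma floor_div_bounds (u : R) :
  L * (Num.floor (u / L))%:~R <= u < L * (Num.floor (u / L))%:~R + L.
Proof.
have lo : (Num.floor (u / L))%:~R <= u / L by exact: Num.Theory.floor_le.
have hi : u / L < (Num.floor (u / L))%:~R + 1.
  by rewrite -[1]/(1%:~R) -rmorphD -Num.Theory.floor_lt_int ltrDl.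
have e : L * (u / L) = u by rewrite mulrC divfK // gt_eqF.
apply/andP; split; first by rewrite -[leRHS]e ler_pM2l.
by rewrite -[ltLHS]e -[X in _ + X]mulr1 -mulrDr ltr_pM2l.
Qed.

Lemma augment_nearby k (t : pt R d) : exists y, augment L w (k, y) /\ nearby y t.
Proof.
pose z j := Num.floor (t j / L).
have zt j : L * (z j)%:~R <= t j < L * (z j)%:~R + L by exact: floor_div_bounds.
case: (pselect (exists y, w (k, y) /\ in_box L z y)) => [[y [wy yz]]|empty].
  exists y; split; first by left.
  move=> j; have /andP[] := zt j; have /andP[] := yz j.
  by rewrite ler_norml; lra.
exists (corner L z); split; first by right; exists z.
by move=> j; have /andP[] := zt j; rewrite /corner ler_norml; lra.
Qed.

Lemma augment_nearby_path (t : nat -> pt R d) :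
  exists y : nat -> pt R d, forall k, augment L w (k, y k) /\ nearby (y k) (t k).
Proof. by have [y yP] := choice (fun k => augment_nearby k (t k)); exists y. Qed.

Lemma l1_ge0 (v : pt R d) : 0 <= l1 v.
Proof. by apply: sumr_ge0 => j _. Qed.

Lemma step_ge0 (x : nat -> pt R d) k : 0 <= step x k.
Proof. exact: l1_ge0. Qed.

Lemma step_nearby (y t : nat -> pt R d) k :
  nearby (y k.-1) (t k.-1) -> nearby (y k) (t k) ->
  step y k <= step t k + d%:R * (2 * L).
Proof.
move=> near1 near2.
have -> : d%:R * (2 * L) = \sum_(j < d) (2 * L) by rewrite sumr_const card_ord mulr_natl.
rewrite /step /l1 -big_split /=.
apply: ler_sum => j _; have := near1 j; have := near2 j.
have -> : y k.-1 j - y k j = (y k.-1 j - t k.-1 j) + (t k.-1 j - t k j) + (t k j - y k j).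
  by ring.
move=> e2 e1; rewrite distrC in e2.
have := ler_normD (y k.-1 j - t k.-1 j) (t k.-1 j - t k j).
have := ler_normD (y k.-1 j - t k.-1 j + (t k.-1 j - t k j)) (t k j - y k j).
lra.
Qed.

Lemma l1_sub_le_sum_step (x : nat -> pt R d) a b : (a <= b)%N ->
  l1 (fun j => x b j - x a j) <= \sum_(a.+1 <= k < b.+1) step x k.
Proof.
elim: b => [|b IH]; rewrite leq_eqVlt => /orP[/eqP <-|ab] //.
- by rewrite big_geq // /l1 big1 // => j _; rewrite subrr normr0.
- by rewrite big_geq // /l1 big1 // => j _; rewrite subrr normr0.
rewrite big_nat_recr //=; apply: le_trans (lerD (IH ab) (lexx _)).
rewrite /step /l1 -big_split /=; apply: ler_sum => j _.
have -> : x b.+1 j - x a j = (x b j - x a j) + - (x b j - x b.+1 j) by ring.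
by rewrite (le_trans (ler_normD _ _)) // normrN.
Qed.

Variables (n : nat) (al : R) (x : nat -> pt R d).
Hypotheses (al_ge0 : 0 <= al) (x_min : minimizing (augment L w) n al x).

Lemma minimizing_block_le (y : nat -> pt R d) a b :
  admissible (augment L w) n y -> (a <= b <= n)%N ->
  (forall k, (1 <= k <= n)%N -> ~~ (a < k <= b)%N -> step y k = step x k) ->
  \sum_(a.+1 <= k < b.+1) step x k `^ al <= \sum_(a.+1 <= k < b.+1) step y k `^ al.
Proof.
move=> y_adm /andP[ab bn] same_out.
have split3 (f : nat -> R) : \sum_(1 <= k < n.+1) f k = \sum_(1 <= k < a.+1) f k +
    \sum_(a.+1 <= k < b.+1) f k + \sum_(b.+1 <= k < n.+1) f k.
  by rewrite -!big_cat_nat //; lia.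
have out_eq lo hi : (1 <= lo)%N -> (hi <= n.+1)%N -> (hi <= a.+1)%N || (b.+1 <= lo)%N ->
    \sum_(lo <= k < hi) step x k `^ al = \sum_(lo <= k < hi) step y k `^ al.
  move=> lo1 hin hab; apply: eq_big_nat => k /andP[lok khi].
  by rewrite same_out //; lia.
have := x_min.2 y y_adm; rewrite /cost !split3.
rewrite (out_eq 1%N a.+1) ?(out_eq b.+1 n.+1) //; [lra | lia..].
Qed.

Lemma reroute_block_le (y t : nat -> pt R d) a b v :
  admissible (augment L w) n y -> (a <= b <= n)%N ->
  (forall k, (1 <= k <= n)%N -> ~~ (a < k <= b)%N -> step y k = step x k) ->
  (forall k, (a <= k <= b)%N -> nearby (y k) (t k)) ->
  (forall k, (a < k <= b)%N -> step t k <= v) ->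
  \sum_(a.+1 <= k < b.+1) step x k `^ al <= (b - a)%:R * (v + d%:R * (2 * L)) `^ al.
Proof.
move=> y_adm abn same_out near tv.
apply: le_trans (minimizing_block_le y_adm abn same_out) _.
rewrite -subSS; apply: sum_powR_le_const => // k /andP[ak kb]; rewrite step_ge0 /=.
apply: le_trans (step_nearby (near k.-1 _) (near k _)) _; try by apply/andP; lia.
by rewrite lerD2r tv //; apply/andP; lia.
Qed.

Lemma minimizing_block_powsum_le a b : (a < b <= n)%N ->
  \sum_(a.+1 <= k < b.+1) step x k `^ al <=
  (b - a)%:R * ((\sum_(a.+1 <= k < b.+1) step x k) / (b - a)%:R + d%:R * (2 * L)) `^ al.
Proof.
move=> /andP[ab bn]; set m := (b - a)%:R; set S := \sum_(_ <= k < _) _.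
have m_gt0 : 0 < m by rewrite ltr0n subn_gt0.
pose t k j := x a j + (k - a)%:R / m * (x b j - x a j).
have ta : t a = x a by apply/funext => j; rewrite /t subnn mul0r mul0r addr0.
have tb : t b = x b by apply/funext => j; rewrite /t divff ?gt_eqF // mul1r; ring.
have [y yP] := augment_nearby_path t.
pose y' k := if (a < k < b)%N then y k else x k.
have y'x k : ~~ (a < k < b)%N -> y' k = x k by rewrite /y' => /negbTE ->.
apply: (@reroute_block_le y' t) => //.
- split; first by rewrite y'x ?x_min.1.1.
  by move=> k kn; rewrite /y'; case: ifP => _; [case: (yP k) | exact: x_min.1.2].
- by rewrite (ltnW ab).
- by move=> k _ k_out; rewrite /step !y'x //; lia.
- move=> k /andP[ak kb]; rewrite /y'; case: ifP => [_|k_out]; first by case: (yP k).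
  have [->|->] : k = a \/ k = b by lia.
  + by rewrite ta; exact: nearby_refl.
  + by rewrite tb; exact: nearby_refl.
- move=> k /andP[ak kb].
  have -> : step t k = l1 (fun j => x b j - x a j) / m.
    rewrite /step /l1 mulr_suml; apply: eq_bigr => j _.
    have -> : t k.-1 j - t k j = (x b j - x a j) * - m^-1.
      rewrite /t; have -> : (k - a = (k.-1 - a) + 1)%N by lia.
      by rewrite natrD; field; rewrite gt_eqF.
    by rewrite normrM normrN (@ger0_norm _ m^-1) // invr_ge0 ltW.
  by rewrite ler_pM2r ?invr_gt0 // l1_sub_le_sum_step // ltnW.
Qed.

Lemma minimizing_tail_powsum_le a : (a <= n)%N ->
  \sum_(a.+1 <= k < n.+1) step x k `^ al <= (n - a)%:R * (d%:R * (2 * L)) `^ al.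
Proof.
move=> an; rewrite -[d%:R * _]add0r.
have [y yP] := augment_nearby_path (fun=> x a).
pose y' k := if (a < k)%N then y k else x k.
have y'x k : (k <= a)%N -> y' k = x k by rewrite /y' ltnNge => ->.
apply: (@reroute_block_le y' (fun=> x a)) => //.
- split; first by rewrite y'x ?x_min.1.1.
  by move=> k kn; rewrite /y'; case: ifP => _; [case: (yP k) | exact: x_min.1.2].
- by rewrite an leqnn.
- by move=> k /andP[_ kn] k_out; rewrite /step !y'x //; lia.
- move=> k /andP[ak _]; rewrite /y'; case: ifP => [_|/negbT ka]; first by case: (yP k).
  have -> : k = a by lia.
  exact: nearby_refl.
- by move=> k _; rewrite /step /l1 big1 // => j _; rewrite subrr normr0.
Qed.

End rerouting.

Lemma minimizing_step_le (R : realType) (d : nat) (L : R) (w : config R d)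
    (n : nat) (al : R) (x : nat -> pt R d) (i K : nat) :
  (1 <= d)%N -> 0 < L -> 1 < al -> minimizing (augment L w) n al x ->
  (1 <= i <= n)%N -> (0 < K)%N ->
  step x i <= 4 * d%:R * beta al * rho al ^+ K * L * n%:R `^ K%:R^-1.
Proof.
move=> d1 L_gt0 al1 x_min /andP[+ i_n]; case: i i_n => // j jn _ K_gt0.
have c_gt0 : 0 < d%:R * (2 * L) by rewrite !mulr_gt0 // ltr0n.
have al_ge0 : 0 <= al by rewrite ltW // (lt_trans ltr01).
have n_ge0 : 0 <= (n%:R : R) := ler0n R n.
pose F : R := n%:R `^ K%:R^-1.
have F1 : 1 <= F by rewrite -[leLHS](powRr0 n%:R) ler_powR ?ler1n ?(leq_ltn_trans _ jn).
have FK : F ^+ K = n%:R.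
  by rewrite -powR_mulrn ?powR_ge0 // -powRrM mulVf ?powRr1 // pnatr_eq0 -lt0n.
have -> : 4 * d%:R * beta al * rho al ^+ K * L * F =
          2 * beta al * (d%:R * (2 * L)) * F * rho al ^+ K by ring.
apply: (block_head_le al1 c_gt0 (step_ge0 x) (M := n - j)) => //.
- by rewrite subn_gt0.
- move=> m m_gt0 mn.
  have := minimizing_block_powsum_le L_gt0 al_ge0 x_min (a := j) (b := j + m).
  rewrite addKn -addSn; apply; lia.
- have := minimizing_tail_powsum_le L_gt0 al_ge0 x_min (ltnW jn).
  by rewrite /block_powsum addSn subnKC // ltnW.
- by rewrite FK ler_nat leq_subr.
Qed.

Lemma powR_budget_le (R : realType) (zeta C : R) (K n : nat) :
  0 < zeta -> 3 < K%:R * zeta -> 0 <= C -> C `^ (3 / zeta) < n%:R ->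
  C * n%:R `^ (zeta / 3) * n%:R `^ K%:R^-1 <= n%:R `^ zeta.
Proof.
move=> z_gt0 K_big C_ge0 Cn.
have n_ge1 : 1 <= (n%:R : R).
  by rewrite ler1n -(ltr0n R) (le_lt_trans (powR_ge0 _ _) Cn).
have n_neq0 : (n%:R : R) != 0 by rewrite gt_eqF // (lt_le_trans ltr01).
set L := n%:R `^ (zeta / 3).
have L_ge0 : 0 <= L := powR_ge0 _ _.
have CL : C <= L.
  have := ler_powR2r (ltW (divr_gt0 z_gt0 (ltr0Sn R 2))) (powR_ge0 _ _) (ltW Cn).
  rewrite -powRrM (_ : 3 / zeta * (zeta / 3) = 1) ?powRr1 //.
  by field; rewrite gt_eqF.
have FL : n%:R `^ K%:R^-1 <= L.
  apply: ler_powR => //; rewrite -div1r ler_pdivrMr; first lra.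
  by rewrite ltr0n lt0n; apply: contraTneq K_big => ->; rewrite mul0r; lra.
have -> : n%:R `^ zeta = L * L * L.
  by rewrite -!powRD ?n_neq0 ?implybT //; congr (_ `^ _); field.
by apply: ler_pM; rewrite ?mulr_ge0 ?powR_ge0 //; apply: ler_pM.
Qed.

Theorem lemma3 (R : realType) (d : nat) (alpha p : R) :
  (1 <= d)%N -> 1 < alpha -> 0 < p <= 1 ->
  forall zeta : R, 0 < zeta ->
  exists theta : R, 0 < theta < zeta /\
  exists N : nat, forall n : nat, (N < n)%N ->
  forall w : config R d, realization p w ->
  forall pi : nat -> pt R d,
    minimizing (augment (n%:R `^ theta) w) n alpha pi ->
  forall i : nat, (1 <= i <= n)%N -> step pi i <= n%:R `^ zeta.
Proof.
move=> d1 al1 _ zeta z_gt0.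
exists (zeta / 3); split; first lra.
pose K := (Num.truncn (3 / zeta)).+1.
pose C := 4 * d%:R * beta alpha * rho alpha ^+ K.
exists (Num.truncn (C `^ (3 / zeta))) => n Nn w _ pi pi_min i i_n.
have L_gt0 : 0 < n%:R `^ (zeta / 3) by rewrite powR_gt0 // ltr0n; lia.
have K_gt0 : (0 < K)%N by [].
apply: le_trans (minimizing_step_le d1 L_gt0 al1 pi_min i_n K_gt0) _.
apply: powR_budget_le => //.
- by rewrite -ltr_pdivrMr //; exact: truncnS_gt.
- have beta_ge0 := le_trans ler01 (beta_ge1 al1).
  have rho_ge0 := le_trans ler01 (rho_ge1 al1).
  exact: mulr_ge0 (mulr_ge0 (mulr_ge0 (ler0n _ 4) (ler0n _ d)) beta_ge0) (exprn_ge0 K rho_ge0).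
- by apply: lt_le_trans (truncnS_gt _) _; rewrite ler_nat.
Qed.
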